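(* Let $\mathcal{Q}=(Q,\leq^Q)$ with $Q=\{1,\dots,k\}$ and $\mathcal{P}=(P,\leq^P)$ be finite posets, $(C_1,\dots,C_w)$ a chain partition of $\mathcal{P}$, $f:Q\to\{1,\dots,w\}$, and $G=G(\mathcal{P},\mathcal{Q},f)$ the graph with vertex set $V_1\,\dot\cup\cdots\dot\cup\, V_k$, $V_i$ a copy of $C_{f(i)}$, where for copies $p\in V_i$, $q\in V_j$ of $p'\in C_{f(i)}$, $q'\in C_{f(j)}$, $pq\in E(G)$ iff $i\neq j$, ($p'\leq^P q'$ iff $i\leq^Q j$) and ($p'\geq^P q'$ iff $i\geq^Q j$). Equip each $V_i$ with the linear order $\leq^G$ inherited from the chain $C_{f(i)}$ under $\leq^P$. Let $i,j\in Q$ with $i\neq j$. Then: (i) for any $p\in V_i$ and $q_1,q_2,q_3\in V_j$ with $q_1\leq^G q_2\leq^G q_3$, if $pq_1,pq_3\in E(G)$ then $pq_2\in E(G)$; (ii) for any $p_1,p_2\in V_i$ and $q_1,q_2\in V_j$ with $p_1\leq^G p_2$ and $q_1\leq^G q_2$, if $p_1q_2,p_2q_1\in E(G)$ then $p_1q_1,p_2q_2\in E(G)$.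
   Context: A chain partition of $\mathcal{P}$ is a partition of $P$ into chains (sets of pairwise comparable elements under $\leq^P$). *)

From HB Require Import structures.
From mathcomp Require Import all_boot all_order.
Set Implicit Arguments. Unset Strict Implicit. Unset Printing Implicit Defensive.
Import Order.TTheory.
Local Open Scope order_scope.

Definition is_poset (T : finType) (le : rel T) : Prop :=
  reflexive le /\ antisymmetric le /\ transitive le.

Definition is_chain d (P : finPOrderType d) (A : {set P}) : Prop :=
  forall x y, x \in A -> y \in A -> (x <= y) || (y <= x).

Definition chain_partition d (P : finPOrderType d) (w : nat)
    (C : 'I_w -> {set P}) : Prop :=
  [/\ forall a, C a != set0,
      forall a b, a != b -> [disjoint C a & C b],
      forall x : P, exists a, x \in C a
    & forall a, is_chain (C a)].

(* Vertices of G(P,Q,f) are pairs (i, p) with p \in C (f i) (a copy of p in V_i).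
   Adjacency of (i,p) and (j,q). *)
Definition G_edge d (P : finPOrderType d) (k : nat) (leQ : rel 'I_k)
    (x y : 'I_k * P) : bool :=
  [&& x.1 != y.1,
      (x.2 <= y.2) == leQ x.1 y.1
    & (y.2 <= x.2) == leQ y.1 x.1].

From HB Require Import structures.
From mathcomp Require Import all_boot all_order.
Set Implicit Arguments. Unset Strict Implicit. Unset Printing Implicit Defensive.
Local Open Scope order_scope.
Import Order.TTheory.

(* Between distinct classes, adjacency only asks that the comparability pattern
   of two elements of P match that of their classes in Q.  Along chains the two
   comparisons [p <= q] and [q <= p] are monotone, so a pattern shared by the
   two ends of a monotone sequence of pairs is shared by every pair in between. *)

Lemma implyb_squeeze {a b c : bool} : (a -> b) -> (b -> c) -> a = c -> b = c.
Proof. by move=> ab bc ac; apply/idP/idP => [/bc | ]; rewrite // -ac => /ab. Qed.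

Section GEdgeBetween.

Variables (d : Order.disp_t) (P : finPOrderType d) (k : nat) (leQ : rel 'I_k).
Variables (i j : 'I_k).
Hypothesis neq_ij : i != j.

Lemma G_edgeE (p q : P) :
  G_edge leQ (i, p) (j, q) = ((p <= q) == leQ i j) && ((q <= p) == leQ j i).
Proof. by rewrite /G_edge /= neq_ij. Qed.

Lemma G_edge_between (p1 q1 p2 q2 p3 q3 : P) :
  (p1 <= q1 -> p2 <= q2) -> (p2 <= q2 -> p3 <= q3) ->
  (q3 <= p3 -> q2 <= p2) -> (q2 <= p2 -> q1 <= p1) ->
  G_edge leQ (i, p1) (j, q1) -> G_edge leQ (i, p3) (j, q3) ->
  G_edge leQ (i, p2) (j, q2).
Proof.
move=> le12 le23 ge32 ge21; rewrite !G_edgeE.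
move=> /andP[/eqP le1 /eqP ge1] /andP[/eqP le3 /eqP ge3].
have -> : (p2 <= q2) = leQ i j by rewrite -le3 (implyb_squeeze le12 le23) // le1.
have -> : (q2 <= p2) = leQ j i by rewrite -ge1 (implyb_squeeze ge32 ge21) // ge3.
by rewrite !eqxx.
Qed.

End GEdgeBetween.

Theorem lemma4p2 (k : nat) (leQ : rel 'I_k) (d : Order.disp_t)
    (P : finPOrderType d) (w : nat) (C : 'I_w -> {set P}) (f : 'I_k -> 'I_w) :
  is_poset leQ -> chain_partition C ->
  forall i j : 'I_k, i != j ->
  (forall (p q1 q2 q3 : P),
      p \in C (f i) -> q1 \in C (f j) -> q2 \in C (f j) -> q3 \in C (f j) ->
      q1 <= q2 -> q2 <= q3 ->
      G_edge leQ (i, p) (j, q1) -> G_edge leQ (i, p) (j, q3) ->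
      G_edge leQ (i, p) (j, q2)) /\
  (forall (p1 p2 q1 q2 : P),
      p1 \in C (f i) -> p2 \in C (f i) -> q1 \in C (f j) -> q2 \in C (f j) ->
      p1 <= p2 -> q1 <= q2 ->
      G_edge leQ (i, p1) (j, q2) -> G_edge leQ (i, p2) (j, q1) ->
      G_edge leQ (i, p1) (j, q1) /\ G_edge leQ (i, p2) (j, q2)).
Proof.
move=> _ _ i j neq_ij; split.
  move=> p q1 q2 q3 _ _ _ _ le_q12 le_q23.
  apply: G_edge_between => // le_p.
  - exact: le_trans le_p le_q12.
  - exact: le_trans le_p le_q23.
  - exact: le_trans le_q23 le_p.
  - exact: le_trans le_q12 le_p.
move=> p1 p2 q1 q2 _ _ _ _ le_p12 le_q12 e12 e21; split.
- apply: (G_edge_between neq_ij _ _ _ _ e21 e12) => le_pq.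
  + exact: le_trans le_p12 le_pq.
  + exact: le_trans le_pq le_q12.
  + exact: le_trans le_q12 le_pq.
  + exact: le_trans le_pq le_p12.
- apply: (G_edge_between neq_ij _ _ _ _ e21 e12) => le_pq.
  + exact: le_trans le_pq le_q12.
  + exact: le_trans le_p12 le_pq.
  + exact: le_trans le_pq le_p12.
  + exact: le_trans le_q12 le_pq.
Qed.
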